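(* Let $Y\subseteq R^n$ be a definable set. Then for any linear decomposition $\mathcal D$ of $Y$ there is a special linear decomposition $\mathcal C$ of $Y$ that refines $\mathcal D$, i.e. every cell of $\mathcal D$ is a union of cells of $\mathcal C$.
   Context: Throughout, $\mathcal R=\langle R,<,+,0,\{x\mapsto\lambda x\}_{\lambda\in\Lambda}\rangle$ is an ordered vector space over an ordered division ring $\Lambda$; ''definable'' means definable in $\mathcal R$ with parameters. $R^n$ carries the product of the order topology, $cl$ denotes closure, $\pi:R^n\to R^{n-1}$ is the projection onto the first $n-1$ coordinates, $R^0=\{0\}$. Linear maps: a linear (affine) map $R^m\to R$ is $x\mapsto\lambda_1x_1+\dots+\lambda_mx_m+a$ with $\lambda_i\in\Lambda$, $a\in R$. For $X\subseteq R^{m}$ and $f,g$ each either a linear map or one of the constant functions $\pm\infty$, with $f<g$ on $X$, put $(f,g)_X=\{(x,y)\in X\times R: f(x)<y<g(x)\}$ and let $\Gamma(f)_X$ be the graph of $f$ restricted to $X$; values at points outside $X$ are those of the linear map. Linear cells: $C\subseteq R$ is a linear cell if it is a singleton or an open interval with endpoints in $R\cup\{\pm\infty\}$; for $n>1$, $C\subseteq R^n$ is a linear cell if $C=\Gamma(f)_X$ with $f$ linear, or $C=(f,g)_X$ with $f,g$ linear or $\pm\infty$, $f<g$ on $X$, where $X\subseteq R^{n-1}$ is a linear cell. Linear decompositions: a linear decomposition of $R$ is a finite partition of $R$ into linear cells; for $n>1$ a linear decomposition of $R^n$ is a finite partition $\mathcal C$ of $R^n$ into linear cells such that $\pi(\mathcal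 C)=\{\pi(D):D\in\mathcal C\}$ is a linear decomposition of $R^{n-1}$. For definable $Y\subseteq R^n$, a linear decomposition of $Y$ is $\{D\cap Y: D\in\mathcal C\}\setminus\{\emptyset\}$ for a linear decomposition $\mathcal C$ of $R^n$ each of whose members is contained in or disjoint from $Y$. Special linear decompositions are defined recursively: every linear decomposition of a subset of $R$ is special; for $n>1$ a linear decomposition $\mathcal C$ of $Y\subseteq R^n$ is special if (1) $\pi(\mathcal C)$ is a special linear decomposition of $\pi(Y)$; (2) for every two cells $\Gamma(f)_S,\Gamma(g)_T\in\mathcal C$ and every $V\in\pi(\mathcal C)$, one has $f<g$ on $V$, or $f=g$ on $V$, or $f>g$ on $V$; (3) for every two cells $\Gamma(h)_S,(f,g)_T\in\mathcal C$ there is no $c\in cl(S)\cap cl(T)$ with $f(c)<h(c)<g(c)$. *)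

From Stdlib Require Import List.
From HB Require Import structures.
From mathcomp Require Import all_boot all_order all_algebra.
Set Implicit Arguments. Unset Strict Implicit. Unset Printing Implicit Defensive.
Import GRing.Theory.
Local Open Scope ring_scope.

Inductive xR (T : Type) := NInf | Fin of T | PInf.
Arguments NInf {T}. Arguments PInf {T}. Arguments Fin {T} _.

Section Setting.
Variable L : unitRingType.
Variable ltL : L -> L -> Prop.
Variable R : lmodType L.
Variable ltR : R -> R -> Prop.

Definition strict_total_order (T : Type) (lt : T -> T -> Prop) : Prop :=
  (forall x, ~ lt x x) /\ (forall x y z, lt x y -> lt y z -> lt x z) /\
  (forall x y, lt x y \/ x = y \/ lt y x).

Definition ordered_division_ring : Prop :=
  strict_total_order ltL /\
  (forall a b c : L, ltL a b -> ltL (a + c) (b + c)) /\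
  (forall a b : L, ltL 0 a -> ltL 0 b -> ltL 0 (a * b)) /\
  (forall a : L, a != 0 -> a \is a GRing.unit).

Definition ordered_vector_space : Prop :=
  strict_total_order ltR /\
  (forall x y z : R, ltR x y -> ltR (x + z) (y + z)) /\
  (forall (a : L) (x : R), ltL 0 a -> ltR 0 x -> ltR 0 (a *: x)).

Definition xlt (a b : xR R) : Prop :=
  match a, b with
  | NInf, NInf => False
  | NInf, _ => True
  | Fin x, Fin y => ltR x y
  | Fin _, PInf => True
  | _, _ => False
  end.

(* R^n as iterated product: R^0 = unit, R^(n+1) = R^n * R;
   the projection π : R^(n+1) -> R^n is fst. *)
Fixpoint Rn (n : nat) : Type := match n with 0 => unit | m.+1 => (Rn m * R)%type end.

(* i-th coordinate (0-based) of a point of R^n; 0 outside range *)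
Fixpoint coord (n : nat) : Rn n -> nat -> R :=
  match n as m return Rn m -> nat -> R with
  | 0 => fun _ _ => 0
  | m.+1 => fun x i => if i == m then x.2 else coord x.1 i
  end.

Inductive term :=
  | TVar of nat | TConst of R | TZero | TAdd of term & term | TScale of L & term.
Inductive formula :=
  | FLt of term & term | FEq of term & term | FNot of formula
  | FAnd of formula & formula | FOr of formula & formula | FEx of nat & formula.

Fixpoint teval (e : nat -> R) (t : term) : R :=
  match t with
  | TVar i => e i | TConst r => r | TZero => 0
  | TAdd t1 t2 => teval e t1 + teval e t2
  | TScale a t1 => a *: teval e t1
  end.

Definition upd (e : nat -> R) (i : nat) (r : R) : nat -> R :=
  fun j => if j == i then r else e j.

Fixpoint holds (e : nat -> R) (f : formula) : Prop :=
  match f with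
  | FLt t1 t2 => ltR (teval e t1) (teval e t2)
  | FEq t1 t2 => teval e t1 = teval e t2
  | FNot g => ~ holds e g
  | FAnd g h => holds e g /\ holds e h
  | FOr g h => holds e g \/ holds e h
  | FEx i g => exists r, holds (upd e i r) g
  end.

Definition definable (n : nat) (Y : Rn n -> Prop) : Prop :=
  exists phi : formula, forall x, Y x <-> holds (coord x) phi.

Fixpoint lcoef (n : nat) : Type := match n with 0 => unit | m.+1 => (lcoef m * L)%type end.
Fixpoint dot (n : nat) : lcoef n -> Rn n -> R :=
  match n as m return lcoef m -> Rn m -> R with
  | 0 => fun _ _ => 0
  | m.+1 => fun c x => dot c.1 x.1 + c.2 *: x.2
  end.
Definition linmap (n : nat) : Type := (lcoef n * R)%type.
Definition leval (n : nat) (f : linmap n) (x : Rn n) : R := dot f.1 x + f.2.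
Definition xeval (n : nat) (b : xR (linmap n)) (x : Rn n) : xR R :=
  match b with NInf => NInf | Fin f => Fin (leval f x) | PInf => PInf end.

Inductive ckind (n : nat) :=
  | KGraph of linmap n
  | KBand of xR (linmap n) & xR (linmap n).

(* a cell of R^(n+1) is given by its base cell X ⊆ R^n and its kind *)
Fixpoint cdesc (n : nat) : Type :=
  match n with 0 => unit | m.+1 => (cdesc m * ckind m)%type end.

Fixpoint cset (n : nat) : cdesc n -> Rn n -> Prop :=
  match n as m return cdesc m -> Rn m -> Prop with
  | 0 => fun _ _ => True
  | m.+1 => fun d x =>
      cset d.1 x.1 /\
      match d.2 with
      | KGraph f => x.2 = leval f x.1
      | KBand f g => xlt (xeval f x.1) (Fin x.2) /\ xlt (Fin x.2) (xeval g x.1)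
      end
  end.

Fixpoint cwf (n : nat) : cdesc n -> Prop :=
  match n as m return cdesc m -> Prop with
  | 0 => fun _ => True
  | m.+1 => fun d =>
      cwf d.1 /\
      match d.2 with
      | KGraph _ => True
      | KBand f g => forall x, cset d.1 x -> xlt (xeval f x) (xeval g x)
      end
  end.

Definition set_eq (n : nat) (A B : Rn n -> Prop) := forall x, A x <-> B x.

Definition partition_of (n : nat) (cs : list (cdesc n)) (Y : Rn n -> Prop) : Prop :=
  (forall x, Y x <-> exists d, In d cs /\ cset d x) /\
  (forall d1 d2, In d1 cs -> In d2 cs ->
     (exists x, cset d1 x /\ cset d2 x) -> set_eq (cset d1) (cset d2)) /\
  (forall d, In d cs -> exists x, cset d x).

Definition proj (n : nat) (cs : list (cdesc n.+1)) : list (cdesc n) := map fst cs.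

Fixpoint is_ldec (n : nat) : list (cdesc n) -> Prop :=
  match n as m return list (cdesc m) -> Prop with
  | 0 => fun cs => partition_of cs (fun _ => True)
  | m.+1 => fun cs =>
      (forall d, In d cs -> cwf d) /\ partition_of cs (fun _ => True) /\
      is_ldec (proj cs)
  end.

Definition is_ldec_of (n : nat) (Y : Rn n -> Prop) (cs : list (cdesc n)) : Prop :=
  exists full : list (cdesc n),
    is_ldec full /\
    (forall d, In d full ->
       (forall x, cset d x -> Y x) \/ (forall x, cset d x -> ~ Y x)) /\
    (forall d, In d cs <-> (In d full /\ forall x, cset d x -> Y x)).

Fixpoint xbox (n : nat) : Type :=
  match n with 0 => unit | m.+1 => (xbox m * (xR R * xR R))%type end.
Fixpoint in_box (n : nat) : xbox n -> Rn n -> Prop :=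
  match n as m return xbox m -> Rn m -> Prop with
  | 0 => fun _ _ => True
  | m.+1 => fun b x => in_box b.1 x.1 /\ xlt b.2.1 (Fin x.2) /\ xlt (Fin x.2) b.2.2
  end.
Definition closure (n : nat) (S : Rn n -> Prop) (c : Rn n) : Prop :=
  forall b : xbox n, in_box b c -> exists s, S s /\ in_box b s.

Definition proj_set (n : nat) (Y : Rn n.+1 -> Prop) : Rn n -> Prop :=
  fun x => exists y, Y (x, y).

Fixpoint is_special (n : nat) : (Rn n -> Prop) -> list (cdesc n) -> Prop :=
  match n as m return (Rn m -> Prop) -> list (cdesc m) -> Prop with
  | 0 => fun Y cs => is_ldec_of Y cs
  | m.+1 => fun Y cs =>
      is_ldec_of Y cs /\
      is_special (proj_set Y) (proj cs) /\
      (forall S f T g, In (S, KGraph f) cs -> In (T, KGraph g) cs ->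
                  forall V, In V (proj cs) ->
                    (forall x, cset V x -> ltR (leval f x) (leval g x)) \/
                    (forall x, cset V x -> leval f x = leval g x) \/
                    (forall x, cset V x -> ltR (leval g x) (leval f x))) /\
      (forall S h T f g, In (S, KGraph h) cs -> In (T, KBand f g) cs ->
                  ~ exists c, closure (cset S) c /\ closure (cset T) c /\
                      xlt (xeval f c) (Fin (leval h c)) /\
                      xlt (Fin (leval h c)) (xeval g c))
  end.

Definition refines (n : nat) (C D : list (cdesc n)) : Prop :=
  forall d, In d D -> forall x,
    cset d x <-> exists c, In c C /\ cset c x /\ (forall z, cset c z -> cset d z).

End Setting.

From Pilot Require Import Defs.
From Stdlib Require Import List Classical ClassicalEpsilon.
From HB Require Import structures.
From mathcomp Require Import all_boot all_order all_algebra.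
Set Implicit Arguments. Unset Strict Implicit. Unset Printing Implicit Defensive.
Import GRing.Theory.
Local Open Scope ring_scope.

(* Fix finitely many affine maps and finitely many cells. By induction on n we build a
   special decomposition of R^n that refines the given cells and on each of whose cells
   every given map has constant sign. For the inductive step, solve every map with nonzero
   last coefficient for the last coordinate, which yields maps h on R^(n-1), and decompose
   R^(n-1) so that all differences h - h' (and the maps not involving the last coordinate)
   have constant sign. Over each base cell the h are then linearly ordered, and their
   graphs together with the bands between consecutive ones are the cells above it.
   Condition (3) holds because an order between two affine maps on a cell persists weakly
   on its closure, affine maps being continuous. Since Y is a union of cells of the given
   decomposition, the cells inside Y form the required special decomposition of Y. *)

Section ClassicalLists.
Variable A : Type.

Fixpoint find_first (P : A -> Prop) (l : list A) : option A :=
  match l with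
  | nil => None
  | a :: l' => if excluded_middle_informative (P a) then Some a else find_first P l'
  end.

Lemma find_first_some (P : A -> Prop) l a : find_first P l = Some a -> In a l /\ P a.
Proof.
elim: l => //= b l IH; case: excluded_middle_informative => [hb [<-]|hb /IH [? ?]].
  by split; [left|].
by split; [right|].
Qed.

Lemma find_first_none (P : A -> Prop) l : find_first P l = None -> forall a, In a l -> ~ P a.
Proof.
elim: l => //= b l IH; case: excluded_middle_informative => // hb /IH h a [<-|]; auto.
Qed.

Lemma eq_find_first (P Q : A -> Prop) l :
  (forall a, P a <-> Q a) -> find_first P l = find_first Q l.
Proof.
move=> e; elim: l => //= b l ->.
by case: excluded_middle_informative => hP; case: excluded_middle_informative => hQ //;
  [case: hQ; apply/e | case: hP; apply/e].
Qed.

Definition filterP (P : A -> Prop) (l : list A) : list A :=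
  List.filter (fun a => if excluded_middle_informative (P a) then true else false) l.

Lemma In_filterP (P : A -> Prop) l a : In a (filterP P l) <-> In a l /\ P a.
Proof.
rewrite /filterP List.filter_In; case: excluded_middle_informative => h; split; by case.
Qed.

Lemma In_map (B : Type) (f : A -> B) l b : In b (map f l) <-> exists a, f a = b /\ In a l.
Proof.
split; first by move/List.in_map_iff => [a [e h]]; exists a.
by case=> a [e h]; apply/List.in_map_iff; exists a.
Qed.

Lemma exists_maximal (T : Type) (lt : T -> T -> Prop) (ev : A -> T) :
  (forall x, ~ lt x x) -> (forall x y z, lt x y -> lt y z -> lt x z) ->
  forall (P : A -> Prop) l, (exists a, In a l /\ P a) ->
  exists m, In m l /\ P m /\ forall a, In a l -> P a -> ~ lt (ev m) (ev a).
Proof.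
move=> irr tr P; elim=> [|b l IH] /=; first by case=> ? [].
case: (classic (exists a, In a l /\ P a)) => [/IH [m [hm [hPm hmax]]]|hno].
  case=> _ _.
  case: (classic (P b /\ lt (ev m) (ev b))) => [[hPb hlt]|hn].
    exists b; split; [by left|split=> // a [<-|ha] hPa]; first exact: irr.
    by move=> h; apply: (hmax a ha hPa); apply: tr hlt h.
  exists m; split; [by right|split=> // a [<-|ha] hPa]; last exact: hmax.
  by move=> h; apply: hn.
case=> a [[<-|ha] hPa]; last by case: hno; exists a.
exists b; split; [by left|split=> // a' [<-|ha'] hPa']; first exact: irr.
by case: hno; exists a'.
Qed.

End ClassicalLists.

Section LinearCells.
Variable L : unitRingType.
Variable ltL : L -> L -> Prop.
Variable R : lmodType L.
Variable ltR : R -> R -> Prop.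
Hypothesis HL : ordered_division_ring ltL.
Hypothesis HR : ordered_vector_space ltL ltR.

Local Notation lin n := (linmap (L:=L) R n).
Local Notation pt n := (Rn (L:=L) R n).
Local Notation cd n := (cdesc (L:=L) R n).

Lemma ltL_irr (a : L) : ~ ltL a a.
Proof. by case: HL => [[H _] _]; apply: H. Qed.
Lemma ltL_trans (a b c : L) : ltL a b -> ltL b c -> ltL a c.
Proof. by case: HL => [[_ [H _]] _]; apply: H. Qed.
Lemma ltL_total (a b : L) : ltL a b \/ a = b \/ ltL b a.
Proof. by case: HL => [[_ [_ H]] _]; apply: H. Qed.
Lemma ltL_add2r (a b c : L) : ltL a b -> ltL (a + c) (b + c).
Proof. by case: HL => [_ [H _]]; apply: H. Qed.
Lemma mulL_gt0 (a b : L) : ltL 0 a -> ltL 0 b -> ltL 0 (a * b).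
Proof. by case: HL => [_ [_ [H _]]]; apply: H. Qed.
Lemma unitL (a : L) : a != 0 -> a \is a GRing.unit.
Proof. by case: HL => [_ [_ [_ H]]]; apply: H. Qed.

Lemma ltR_irr (x : R) : ~ ltR x x.
Proof. by case: HR => [[H _] _]; apply: H. Qed.
Lemma ltR_trans (x y z : R) : ltR x y -> ltR y z -> ltR x z.
Proof. by case: HR => [[_ [H _]] _]; apply: H. Qed.
Lemma ltR_total (x y : R) : ltR x y \/ x = y \/ ltR y x.
Proof. by case: HR => [[_ [_ H]] _]; apply: H. Qed.
Lemma ltR_add2r (x y z : R) : ltR x y -> ltR (x + z) (y + z).
Proof. by case: HR => [_ [H _]]; apply: H. Qed.
Lemma scaleR_gt0 (a : L) (x : R) : ltL 0 a -> ltR 0 x -> ltR 0 (a *: x).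
Proof. by case: HR => [_ [_ H]]; apply: H. Qed.

Lemma ltR_asym (x y : R) : ltR x y -> ltR y x -> False.
Proof. by move=> h1 h2; apply: (ltR_irr (ltR_trans h1 h2)). Qed.

Lemma ltR_add2l (x y z : R) : ltR x y -> ltR (z + x) (z + y).
Proof. by rewrite ![z + _]addrC; apply: ltR_add2r. Qed.

Lemma subR_gt0 (x y : R) : ltR x y <-> ltR 0 (y - x).
Proof.
split=> h; first by have := ltR_add2r (- x) h; rewrite subrr.
by have := ltR_add2r x h; rewrite add0r subrK.
Qed.

Lemma subR_lt0 (x y : R) : ltR x y <-> ltR (x - y) 0.
Proof.
split=> h; first by have := ltR_add2r (- y) h; rewrite subrr.
by have := ltR_add2r y h; rewrite add0r subrK.
Qed.

Lemma addR_gt0 (x y : R) : ltR 0 x -> ltR 0 y -> ltR 0 (x + y).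
Proof. by move=> hx hy; apply: ltR_trans hx _; have := ltR_add2l x hy; rewrite addr0. Qed.

Lemma ltR_pscale2l (a : L) (x y : R) : ltL 0 a -> ltR x y -> ltR (a *: x) (a *: y).
Proof. by move=> ha /subR_gt0 h; apply/subR_gt0; rewrite -scalerBr; apply: scaleR_gt0. Qed.

Lemma oppL_gt0 (a : L) : ltL a 0 -> ltL 0 (- a).
Proof. by move=> h; have := ltL_add2r (- a) h; rewrite subrr add0r. Qed.

Lemma ltR_nscale2l (a : L) (x y : R) : ltL a 0 -> ltR x y -> ltR (a *: y) (a *: x).
Proof.
move=> ha /subR_gt0 h; apply/subR_gt0.
by rewrite -scalerBr -opprB scalerN -scaleNr; apply: scaleR_gt0 (oppL_gt0 ha) h.
Qed.

Lemma ltL01 : ltL 0 1.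
Proof.
case: (ltL_total 0 1) => [//|[h|h]]; first by move: (@oner_neq0 L); rewrite -h eqxx.
have := mulL_gt0 (oppL_gt0 h) (oppL_gt0 h); rewrite mulrNN mulr1 => h'.
by case: (ltL_irr (ltL_trans h h')).
Qed.

Lemma gtL0_neq0 (a : L) : ltL 0 a -> a != 0.
Proof. by move=> h; apply/eqP => e; rewrite e in h; apply: (ltL_irr h). Qed.

Lemma ltL0_neq0 (a : L) : ltL a 0 -> a != 0.
Proof. by move=> h; apply/eqP => e; rewrite e in h; apply: (ltL_irr h). Qed.

Lemma invL_gt0 (a : L) : ltL 0 a -> ltL 0 a^-1.
Proof.
move=> h; have ua := unitL (gtL0_neq0 h).
case: (ltL_total 0 a^-1) => [//|[e|e]].
  by move: (gtL0_neq0 h); rewrite -(invrK a) -e invr0 eqxx.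
have := mulL_gt0 h (oppL_gt0 e); rewrite mulrN mulrV // => h'.
by have := ltL_add2r 1 h'; rewrite addNr add0r => /(ltL_trans ltL01)/ltL_irr.
Qed.

Definition half : L := (1 + 1)^-1.

Lemma ltL02 : ltL 0 (1 + 1).
Proof. by apply: ltL_trans ltL01 _; have := ltL_add2r 1 ltL01; rewrite add0r. Qed.

Lemma half_gt0 : ltL 0 half.
Proof. exact: invL_gt0 ltL02. Qed.

Lemma scale_halfD (x : R) : half *: x + half *: x = x.
Proof.
by rewrite -scalerDl -{1 2}(mulr1 half) -mulrDr mulVr ?scale1r //; apply/unitL/gtL0_neq0/ltL02.
Qed.

Lemma mid_between (x y : R) : ltR x y -> ltR x (half *: (x + y)) /\ ltR (half *: (x + y)) y.
Proof.
move=> h; rewrite scalerDr; split.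
  by have := ltR_add2l (half *: x) (ltR_pscale2l half_gt0 h); rewrite scale_halfD.
by have := ltR_add2r (half *: y) (ltR_pscale2l half_gt0 h); rewrite scale_halfD.
Qed.

Fixpoint lcoefB n : lcoef L n -> lcoef L n -> lcoef L n :=
  match n with 0 => fun _ _ => tt | m.+1 => fun c d => (lcoefB c.1 d.1, c.2 - d.2) end.
Fixpoint lcoefZ n (mu : L) : lcoef L n -> lcoef L n :=
  match n with 0 => fun _ => tt | m.+1 => fun c => (lcoefZ mu c.1, mu * c.2) end.

Lemma dotB n (c d : lcoef L n) (x : pt n) : dot (lcoefB c d) x = dot c x - dot d x.
Proof.
elim: n c d x => [|n IH] c d x /=; first by rewrite subrr.
by rewrite IH scalerBl opprD addrACA.
Qed.

Lemma dotZ n mu (c : lcoef L n) (x : pt n) : dot (lcoefZ mu c) x = mu *: dot c x.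
Proof.
elim: n c x => [|n IH] c x /=; first by rewrite scaler0.
by rewrite IH scalerDr scalerA.
Qed.

Definition linB n (a b : lin n) : lin n := (lcoefB a.1 b.1, a.2 - b.2).

Lemma levalB n (a b : lin n) x : leval (linB a b) x = leval a x - leval b x.
Proof. by rewrite /leval /= dotB opprD addrACA. Qed.

Lemma affine1_gt0_nbhs (lam : L) (c e : R) : ltR 0 e ->
  exists bl : xR R * xR R, (xlt ltR bl.1 (Fin c) /\ xlt ltR (Fin c) bl.2) /\
    forall y, xlt ltR bl.1 (Fin y) -> xlt ltR (Fin y) bl.2 -> ltR 0 (lam *: (y - c) + e).
Proof.
move=> he; case: (ltL_total 0 lam) => [hl|[<-|hl]].
- pose d := lam^-1 *: e.
  have hd : ltR 0 d by apply: scaleR_gt0 (invL_gt0 hl) he.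
  exists (Fin (c - d), PInf); split.
    by split=> //=; apply/subR_gt0; rewrite opprB addrC subrK.
  move=> y /= hy _.
  have h1 : ltR (- d) (y - c) by have := ltR_add2r (- c) hy; rewrite addrAC subrr add0r.
  have := ltR_pscale2l hl h1; rewrite scalerN /d scalerA mulrV ?scale1r; last exact/unitL/gtL0_neq0.
  by move/(ltR_add2r e); rewrite addNr.
- by exists (NInf, PInf); split=> // y _ _; rewrite scale0r add0r.
- pose d := (- lam)^-1 *: e.
  have hd : ltR 0 d by apply: scaleR_gt0 (invL_gt0 (oppL_gt0 hl)) he.
  exists (NInf, Fin (c + d)); split.
    by split=> //=; apply/subR_gt0; rewrite addrC addKr.
  move=> y _ /= hy.
  have h1 : ltR (y - c) d by have := ltR_add2r (- c) hy; rewrite addrAC subrr add0r.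
  have := ltR_nscale2l hl h1; rewrite /d scalerA invrN mulrN mulrV ?scaleN1r;
    last exact/unitL/ltL0_neq0.
  by move/(ltR_add2r e); rewrite addNr.
Qed.

Lemma leval_gt0_nbhs n (l : lin n) c : ltR 0 (leval l c) ->
  exists b : xbox R n, in_box ltR b c /\ forall x, in_box ltR b x -> ltR 0 (leval l x).
Proof.
elim: n l c => [|n IH] l c.
  by move=> h; exists tt; split=> // x _; case: x; case: c h.
case: l => [[l' lam] a]; case: c => [c' cy] /=; set e := leval _ _ => he.
set e2 := half *: e.
have he2 : ltR 0 e2 by apply: scaleR_gt0 half_gt0 he.
pose l'' : lin n := (l', lam *: cy + a - e2).
have h'' : ltR 0 (leval l'' c').
  have -> : leval l'' c' = e - e2 by rewrite /leval /e /= !addrA.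
  by rewrite -{1}(scale_halfD e) addrK.
have [b' [hb'c hb']] := IH _ _ h''.
have [bl [hbc hb]] := affine1_gt0_nbhs lam cy he2.
exists (b', bl); split=> // -[x' y] /= [hx' [hy1 hy2]].
have -> : leval (((l', lam), a) : lin n.+1) (x', y) = leval l'' x' + (lam *: (y - cy) + e2).
  by rewrite /leval /= scalerBr addrACA subrK addrA -(addrA _ (_ - _)) subrK.
by apply: addR_gt0; [apply: hb' | apply: hb].
Qed.

Lemma closure_nlt n (a b : lin n) (S : pt n -> Prop) c :
  (forall x, S x -> ~ ltR (leval a x) (leval b x)) -> Defs.closure ltR S c ->
  ~ ltR (leval a c) (leval b c).
Proof.
move=> h hc /subR_gt0; rewrite -levalB => /leval_gt0_nbhs [bx [hbc hbx]].
have [s [hs hsb]] := hc bx hbc.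
by apply: (h s hs); apply/subR_gt0; rewrite -levalB; apply: hbx.
Qed.

Definition sign_inv n (S : pt n -> Prop) (u : pt n -> R) :=
  (forall x, S x -> ltR (u x) 0) \/ (forall x, S x -> u x = 0) \/ (forall x, S x -> ltR 0 (u x)).

Lemma sign_inv_lift n (S : pt n.+1 -> Prop) (S' : pt n -> Prop) u u' : sign_inv S' u ->
  (forall p, S p -> S' p.1 /\ u' p = u p.1) -> sign_inv S u'.
Proof.
by move=> [h|[h|h]] e; [left|right;left|right;right] => p hp; case: (e p hp) => h1 ->; apply: h.
Qed.

Lemma eq_sign_inv n (S : pt n -> Prop) u v : sign_inv S u -> (forall x, S x -> u x = v x) ->
  sign_inv S v.
Proof. by move=> [h|[h|h]] e; [left|right;left|right;right] => p hp; rewrite -e //; apply: h. Qed.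

Lemma sign_invZ n (S : pt n -> Prop) u (lam : L) : sign_inv S u -> lam != 0 ->
  sign_inv S (fun p => lam *: u p).
Proof.
have Z0 : lam *: (0 : R) = 0 by rewrite scaler0.
move=> h hl; case: (ltL_total 0 lam) => [lp|[e|ln]]; last 2 first.
- by rewrite -e eqxx in hl.
- case: h => [h|[h|h]]; [right;right|right;left|left] => p hp.
  + by rewrite -Z0; apply: ltR_nscale2l ln (h p hp).
  + by rewrite h // scaler0.
  + by rewrite -Z0; apply: ltR_nscale2l ln (h p hp).
case: h => [h|[h|h]]; [left|right;left|right;right] => p hp.
+ by rewrite -Z0; apply: ltR_pscale2l lp (h p hp).
+ by rewrite h // scaler0.
+ by rewrite -Z0; apply: ltR_pscale2l lp (h p hp).
Qed.

Lemma sign_inv_levalB n (S : pt n -> Prop) (a b : lin n) : sign_inv S (leval (linB a b)) ->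
  (forall x, S x -> ltR (leval a x) (leval b x)) \/
  (forall x, S x -> leval a x = leval b x) \/
  (forall x, S x -> ltR (leval b x) (leval a x)).
Proof.
case=> [h|[h|h]]; [left|right;left|right;right] => x hx; have := h x hx; rewrite levalB.
- by move=> hh; apply/subR_lt0.
- by move/eqP; rewrite subr_eq0 => /eqP.
- by move=> hh; apply/subR_gt0.
Qed.

Definition disjoint_cells n (C : list (cd n)) := forall d1 d2, In d1 C -> In d2 C ->
  (exists x, cset ltR d1 x /\ cset ltR d2 x) -> d1 = d2.
Definition covering n (C : list (cd n)) := forall x, exists d, In d C /\ cset ltR d x.
Definition nonempty_cells n (C : list (cd n)) := forall d, In d C -> exists x, cset ltR d x.
Definition full_fibres n (C : list (cd n.+1)) :=
  forall e, In e C -> forall x, cset ltR e.1 x -> exists y, cset ltR e (x, y).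
Definition graphs_comparable n (cs : list (cd n.+1)) :=
  forall S f T g, In (S, KGraph f) cs -> In (T, KGraph g) cs ->
    forall V, In V (proj cs) ->
      (forall x, cset ltR V x -> ltR (leval f x) (leval g x)) \/
      (forall x, cset ltR V x -> leval f x = leval g x) \/
      (forall x, cset ltR V x -> ltR (leval g x) (leval f x)).
Definition graphs_miss_bands n (cs : list (cd n.+1)) :=
  forall S h T f g, In (S, KGraph h) cs -> In (T, KBand f g) cs ->
    ~ exists c, Defs.closure ltR (cset ltR S) c /\ Defs.closure ltR (cset ltR T) c /\
        xlt ltR (xeval f c) (Fin (leval h c)) /\ xlt ltR (Fin (leval h c)) (xeval g c).

Fixpoint good n : list (cd n) -> Prop :=
  match n as m return list (cd m) -> Prop with
  | 0 => fun C => disjoint_cells C /\ covering C /\ nonempty_cells C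
  | m.+1 => fun C => disjoint_cells C /\ covering C /\ nonempty_cells C /\
      (forall d, In d C -> cwf ltR d) /\ full_fibres C /\ good (proj C) /\
      graphs_comparable C /\ graphs_miss_bands C
  end.

Lemma In_proj n (C : list (cd n.+1)) d : In d (proj C) <-> exists e, e.1 = d /\ In e C.
Proof. exact: In_map. Qed.

Lemma good_partition n (C : list (cd n)) :
  good C -> disjoint_cells C /\ covering C /\ nonempty_cells C.
Proof. by case: n C => [|n] C /=; [|case=> [? [? [? _]]]]. Qed.

Lemma good_cwf n (C : list (cd n)) : good C -> forall d, In d C -> cwf ltR d.
Proof. by case: n C => [|n] C /=; [|case=> [_ [_ [_ [? _]]]]]. Qed.

Lemma eq_mem_good n (C1 C2 : list (cd n)) : (forall d, In d C1 <-> In d C2) -> good C1 -> good C2.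
Proof.
have part : forall m (D1 D2 : list (cd m)), (forall d, In d D1 <-> In d D2) ->
    disjoint_cells D1 /\ covering D1 /\ nonempty_cells D1 ->
    disjoint_cells D2 /\ covering D2 /\ nonempty_cells D2.
  move=> m D1 D2 e [hc [hv hn]]; split; [|split].
  - by move=> d1 d2 /e h1 /e h2; apply: hc.
  - by move=> x; have [d [/e ? ?]] := hv x; exists d.
  - by move=> d /e; apply: hn.
elim: n C1 C2 => [|n IH] C1 C2 e /=; first exact: part.
case=> hc [hv [hn [hw [hf [hg [h2 h3]]]]]].
have [hc' [hv' hn']] := part _ _ _ e (conj hc (conj hv hn)).
have ep : forall d, In d (proj C1) <-> In d (proj C2).
  by move=> d; rewrite !In_proj; split; case=> e' [? /e ?]; exists e'.
split=> //; split=> //; split=> //; split; [|split; [|split; [|split]]].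
- by move=> d /e; apply: hw.
- by move=> d /e; apply: hf.
- exact: IH hg.
- by move=> S f T g /e h1 /e h2' V /ep hV; exact: (h2 _ _ _ _ h1 h2' _ hV).
- by move=> S h T f g /e h1 /e h2'; exact: (h3 _ _ _ _ _ h1 h2').
Qed.

Lemma partition_of_cells n (C : list (cd n)) :
  disjoint_cells C -> covering C -> nonempty_cells C -> partition_of ltR C (fun=> True).
Proof.
move=> hc hv hn; split; first by move=> x; split=> // _; apply: hv.
by split=> // d1 d2 h1 h2 /(hc _ _ h1 h2) ->.
Qed.

Lemma good_ldec n (C : list (cd n)) : good C -> is_ldec ltR C.
Proof.
elim: n C => [|n IH] C /=; first by case=> [hc [hv hn]]; apply: partition_of_cells.
case=> hc [hv [hn [hw [_ [hg _]]]]].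
by split=> //; split; [apply: partition_of_cells | apply: IH].
Qed.

Lemma ldec_covering n (C : list (cd n)) : is_ldec ltR C -> covering C.
Proof. by case: n C => [|n] C /=; [case=> [h _]|case=> [_ [[h _] _]]] => x; apply/h. Qed.

Definition decides n (Y : pt n -> Prop) (C : list (cd n)) := forall d, In d C ->
  (forall x, cset ltR d x -> Y x) \/ (forall x, cset ltR d x -> ~ Y x).
Definition cells_in n (Y : pt n -> Prop) (C cs : list (cd n)) := forall d,
  In d cs <-> In d C /\ (forall x, cset ltR d x -> Y x).

Section ProjectUnion.
Variables (n : nat) (C : list (cd n.+1)) (Y : pt n.+1 -> Prop).
Hypotheses (hg : good C) (hY : decides Y C).

Lemma cell_in_union x y : Y (x, y) ->
  exists e, In e C /\ cset ltR e.1 x /\ (forall q, cset ltR e q -> Y q).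
Proof.
move=> hy; have [_ [hv _]] := good_partition hg; have [e [he hxe]] := hv (x, y).
exists e; split=> //; split; first by case: hxe.
by case: (hY he) => // /(_ _ hxe).
Qed.

Lemma proj_cell_eq e e' x : In e C -> In e' C -> cset ltR e.1 x -> cset ltR e'.1 x -> e.1 = e'.1.
Proof.
case: hg => [_ [_ [_ [_ [_ [/good_partition [hcl _] _]]]]]] he he' hx hx'.
by apply: hcl; [apply/In_proj; exists e|apply/In_proj; exists e'|exists x].
Qed.

Lemma decides_proj : decides (proj_set Y) (proj C).
Proof.
case: hg => [_ [_ [_ [_ [hf _]]]]] d /In_proj [e [<- he]].
case: (classic (exists x, cset ltR e.1 x /\ proj_set Y x)) => [[x [hx [y hy]]]|hno].
  have [e' [he' [hxe' hYe']]] := cell_in_union hy.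
  left=> x'; rewrite (proj_cell_eq he he' hx hxe') => /(hf _ he') [y' hy'].
  by exists y'; apply: hYe'.
by right=> x hx hy; apply: hno; exists x.
Qed.

Lemma cells_in_proj cs : cells_in Y C cs -> cells_in (proj_set Y) (proj C) (proj cs).
Proof.
case: hg => [_ [_ [_ [_ [hf [/good_partition [_ [_ hnp]] _]]]]]] hcs d; split.
  case/In_proj=> e [<- /hcs [heC heY]]; split; first by apply/In_proj; exists e.
  by move=> x /(hf _ heC) [y hy]; exists y; apply: heY.
case=> /In_proj [e [<- heC]] hd.
have [x hx] : exists x, cset ltR e.1 x by apply: hnp; apply/In_proj; exists e.
have [y hy] := hd _ hx.
have [e' [he' [hxe' hYe']]] := cell_in_union hy.
by apply/In_proj; exists e'; split; [apply: proj_cell_eq hxe' hx | apply/hcs].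
Qed.

End ProjectUnion.

Lemma good_special n (C : list (cd n)) (Y : pt n -> Prop) (cs : list (cd n)) :
  good C -> decides Y C -> cells_in Y C cs -> is_special ltR Y cs.
Proof.
have ldec_of : forall m (D ds : list (cd m)) (Z : pt m -> Prop),
    good D -> decides Z D -> cells_in Z D ds -> is_ldec_of ltR Z ds.
  by move=> m D ds Z hg hZ hds; exists D; split; [apply: good_ldec|split].
elim: n C Y cs => [|n IH] C Y cs hg hY hcs; first exact: ldec_of hg hY hcs.
have hsub : forall d, In d cs -> In d C by move=> d /hcs [].
have [_ [_ [_ [_ [_ [hgp [h2 h3]]]]]]] := hg.
split; first exact: ldec_of hg hY hcs.
split; first by apply: IH hgp (decides_proj hg hY) (cells_in_proj hg hY hcs).
split; last by move=> S h T f g h1 h2'; apply: (h3 S h T f g); apply: hsub.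
move=> S f T g h1 h2' V /In_proj [e [<- he]]; apply: (h2 S f T g); try exact: hsub.
by apply/In_proj; exists e; split=> //; apply: hsub.
Qed.

Definition in_kind n (k : ckind (L:=L) R n) (x : pt n) (y : R) : Prop :=
  match k with
  | KGraph f => y = leval f x
  | KBand f g => xlt ltR (xeval f x) (Fin y) /\ xlt ltR (Fin y) (xeval g x)
  end.

Lemma xlt_dense : (exists z : R, z <> 0) -> forall a b : xR R, xlt ltR a b ->
  exists y, xlt ltR a (Fin y) /\ xlt ltR (Fin y) b.
Proof.
case=> z hz.
have [p hp] : exists p, ltR 0 p.
  case: (ltR_total z 0) => [h|[//|h]]; last by exists z.
  by exists (- z); have /subR_gt0 := h; rewrite sub0r.
case=> [|a|] [|b|] //= h.
- by exists (b - p); split=> //; apply/subR_gt0; rewrite opprB addrC subrK.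
- by exists (half *: (a + b)); apply: mid_between.
- by exists (a + p); split=> //; apply/subR_gt0; rewrite addrC addKr.
Qed.

(* In the zero space every fibre is a single point, so density is not available. *)
Lemma in_kind_fibre n (k : ckind (L:=L) R n) x :
  (match k with KGraph _ => True | KBand f g => xlt ltR (xeval f x) (xeval g x) end) ->
  (exists x0 y0, in_kind k x0 y0) -> exists y, in_kind k x y.
Proof.
case: k => [f|lo hi] /=; first by move=> _ _; exists (leval f x).
move=> hlt [x0 [y0 h0]].
case: (classic (exists z : R, z <> 0)) => [nt|trivR]; first exact: xlt_dense nt _ _ hlt.
have z0 (z : R) : z = 0 by apply: NNPP => hz; apply: trivR; exists z.
have ex : forall b : xR (lin n), xeval b x = xeval b x0.
  by case=> //= f; rewrite (z0 (leval f x)) (z0 (leval f x0)).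
by exists y0; rewrite !ex.
Qed.

Lemma exists_maxR A (ev : A -> R) P l : (exists a, In a l /\ P a) ->
  exists m, In m l /\ P m /\ forall a, In a l -> P a -> ~ ltR (ev m) (ev a).
Proof. exact: exists_maximal ltR_irr ltR_trans P l. Qed.

Lemma exists_minR A (ev : A -> R) P l : (exists a, In a l /\ P a) ->
  exists m, In m l /\ P m /\ forall a, In a l -> P a -> ~ ltR (ev a) (ev m).
Proof.
apply: (exists_maximal (lt := fun x y => ltR y x)) => [x|x y z h1 h2]; first exact: ltR_irr.
exact: ltR_trans h2 h1.
Qed.

Section Fibre.
Variable n : nat.
Variable H : list (lin n).

Definition below (V : cd n) (a b : lin n) := forall x, cset ltR V x -> ltR (leval a x) (leval b x).
Definition agree (V : cd n) (a b : lin n) := forall x, cset ltR V x -> leval a x = leval b x.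
(* Maps agreeing on V get the same representative, so that the description of a cell
   over V is determined by the set it denotes. *)
Definition rep V h := match find_first (agree V h) H with Some a => a | None => h end.
Definition is_next V h h' :=
  below V h h' /\ forall h'', In h'' H -> below V h h'' -> ~ below V h'' h'.
Definition next V h : xR (lin n) :=
  match find_first (is_next V h) H with Some a => Fin (rep V a) | None => PInf end.
Definition is_lowest V h' := forall h'', In h'' H -> ~ below V h'' h'.
Definition lowest V : xR (lin n) :=
  match find_first (is_lowest V) H with Some a => Fin (rep V a) | None => PInf end.
Definition fibre_kinds V : list (ckind (L:=L) R n) :=
  app (map (fun h => KGraph (rep V h)) H)
    (app (map (fun h => KBand (Fin (rep V h)) (next V h)) H) (KBand NInf (lowest V) :: nil)).

Definition ordered_on V := (exists x, cset ltR V x) /\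
  forall a b, In a H -> In b H -> below V a b \/ agree V a b \/ below V b a.

Lemma In_fibre_kinds V k : In k (fibre_kinds V) <->
  (exists h, In h H /\ k = KGraph (rep V h)) \/
  (exists h, In h H /\ k = KBand (Fin (rep V h)) (next V h)) \/ k = KBand NInf (lowest V).
Proof.
rewrite /fibre_kinds !List.in_app_iff !In_map /=.
split.
  case=> [[h [e hh]]|[[h [e hh]]|[e|[]]]].
  - by left; exists h.
  - by right; left; exists h.
  - by right; right.
case=> [[h [e hh]]|[[h [e hh]]|e]].
- by left; exists h.
- by right; left; exists h.
- by right; right; left.
Qed.

Lemma rep_in V h : In h H -> In (rep V h) H.
Proof. by rewrite /rep; case e: find_first => [a|] // _; case: (find_first_some e). Qed.
Lemma leval_rep V h x : In h H -> cset ltR V x -> leval (rep V h) x = leval h x.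
Proof.
rewrite /rep; case e: find_first => [a|] // hh hx.
by case: (find_first_some e) => _ /(_ x hx) ->.
Qed.
Lemma eq_rep V h1 h2 : In h1 H -> agree V h1 h2 -> rep V h1 = rep V h2.
Proof.
move=> hh e; rewrite /rep.
have -> : find_first (agree V h1) H = find_first (agree V h2) H.
  apply: eq_find_first => a; split=> h x hx; first by rewrite -e // h.
  by rewrite e // h.
case f: find_first => [a|] //.
by case: (find_first_none f hh); move=> x hx; rewrite e.
Qed.

Section OrderedBase.
Variable V : cd n.
Hypothesis hV : ordered_on V.

Lemma agree_of_eq a b x : In a H -> In b H -> cset ltR V x ->
  leval a x = leval b x -> agree V a b.
Proof.
move=> ha hb hx h; case: (proj2 hV a b ha hb) => [e|[//|e]].
  by have := e x hx; rewrite h => /ltR_irr.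
by have := e x hx; rewrite h => /ltR_irr.
Qed.
Lemma below_irr a : ~ below V a a.
Proof. by case: hV => [[x hx] _] h; apply: (ltR_irr (h x hx)). Qed.

Lemma next_exists h0 : In h0 H -> (exists h, In h H /\ below V h0 h) ->
  exists m, In m H /\ is_next V h0 m /\ next V h0 = Fin (rep V m).
Proof.
move=> h0H hex; rewrite /next; case e: find_first => [a|].
  by case: (find_first_some e) => ? ?; exists a.
case: hV => [[x0 hx0] _].
have [m [hm [hlt hmin]]] := exists_minR (fun h => leval h x0) hex.
case: (find_first_none e hm); split=> // h'' hh'' hlt'' hlt2.
by apply: (hmin h'' hh'' hlt''); apply: hlt2.
Qed.
Lemma next_cases h0 : In h0 H ->
  (next V h0 = PInf /\ forall h, In h H -> ~ below V h0 h) \/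
  (exists m, In m H /\ is_next V h0 m /\ next V h0 = Fin (rep V m)).
Proof.
move=> h0H; case: (classic (exists h, In h H /\ below V h0 h)) => [hex|hno].
  by right; apply: next_exists.
left; split; last by move=> h hh hl; apply: hno; exists h.
rewrite /next; case e: find_first => [a|] //.
by case: (find_first_some e) => ha [hl _]; case: hno; exists a.
Qed.
Lemma eq_next h1 h2 : agree V h1 h2 -> next V h1 = next V h2.
Proof.
move=> e; rewrite /next.
have E : forall b, below V h1 b <-> below V h2 b.
  by move=> b; split=> h x hx; [rewrite -e | rewrite e] => //; apply: h.
rewrite (@eq_find_first _ (is_next V h1) (is_next V h2)) //.
move=> a; rewrite /is_next; split; case=> p q; split.
- exact/E.
- by move=> h'' hh hl; apply: q hh _; apply/E.
- exact/E.
- by move=> h'' hh hl; apply: q hh _; apply/E.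
Qed.
Lemma lowest_exists h : In h H -> exists m, In m H /\ is_lowest V m /\ lowest V = Fin (rep V m).
Proof.
move=> hH; rewrite /lowest; case e: find_first => [a|].
  by case: (find_first_some e) => ? ?; exists a.
case: hV => [[x0 hx0] _].
have [m [hm [_ hmin]]] :=
  exists_minR (fun h => leval h x0) (P := fun _ => True) (ex_intro _ h (conj hH I)).
case: (find_first_none e hm) => h'' hh'' hlt.
by apply: (hmin h'' hh'' I); apply: hlt.
Qed.

Lemma le_of_not_below a b x : In a H -> In b H -> cset ltR V x -> ~ below V a b ->
  ltR (leval b x) (leval a x) \/ leval b x = leval a x.
Proof.
move=> ha hb hx hn; case: (proj2 hV a b ha hb) => [//|[e|e]].
  by right; rewrite e.
by left; apply: e.
Qed.

Lemma not_below_nlt a b x : In a H -> In b H -> cset ltR V x -> ~ below V a b ->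
  ~ ltR (leval a x) (leval b x).
Proof.
move=> ha hb hx hn hab; case: (le_of_not_below ha hb hx hn) => [hba|e].
  exact: ltR_asym hab hba.
by rewrite e in hab; apply: ltR_irr hab.
Qed.

Lemma in_graph_kind h1 x y : In h1 H -> cset ltR V x ->
  in_kind (KGraph (rep V h1)) x y -> y = leval h1 x.
Proof. by move=> hh hx /= ->; rewrite leval_rep. Qed.

Lemma in_band_kind h0 h x y : In h0 H -> In h H -> cset ltR V x ->
  in_kind (KBand (Fin (rep V h0)) (next V h0)) x y ->
  (below V h0 h -> ltR y (leval h x)) /\ (~ below V h0 h -> ltR (leval h x) y).
Proof.
move=> h0H hH hx /= [hlo hhi]; rewrite leval_rep // in hlo; split=> hl.
  have [m [hm [[hm1 hm2] en]]] := next_exists h0H (ex_intro _ h (conj hH hl)).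
  rewrite en /= leval_rep // in hhi.
  case: (le_of_not_below hH hm hx (hm2 h hH hl)) => [hmh|e]; first exact: ltR_trans hhi hmh.
  by rewrite -e.
case: (le_of_not_below h0H hH hx hl) => [a|e]; first exact: ltR_trans a hlo.
by rewrite e.
Qed.

Lemma in_lowest_kind h x y : In h H -> cset ltR V x ->
  in_kind (KBand NInf (lowest V)) x y -> ltR y (leval h x).
Proof.
move=> hH hx /= [_ hy].
have [m [hm [hmin e]]] := lowest_exists hH.
rewrite e /= leval_rep // in hy.
case: (le_of_not_below hH hm hx (hmin h hH)) => [a|e']; first exact: ltR_trans hy a.
by rewrite -e'.
Qed.

Lemma in_band_kind_neq h0 h x y : In h0 H -> In h H -> cset ltR V x ->
  in_kind (KBand (Fin (rep V h0)) (next V h0)) x y -> y <> leval h x.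
Proof.
move=> h0H hH hx hk e; have [K1 K2] := in_band_kind h0H hH hx hk.
case: (classic (below V h0 h)) => hl.
  by have := K1 hl; rewrite e => /ltR_irr.
by have := K2 hl; rewrite e => /ltR_irr.
Qed.

Lemma fibre_kind_sign h k : In h H -> In k (fibre_kinds V) ->
  (forall x y, cset ltR V x -> in_kind k x y -> ltR y (leval h x)) \/
  (forall x y, cset ltR V x -> in_kind k x y -> y = leval h x) \/
  (forall x y, cset ltR V x -> in_kind k x y -> ltR (leval h x) y).
Proof.
move=> hH /In_fibre_kinds [[h1 [h1H ->]]|[[h0 [h0H ->]]|->]].
- case: (proj2 hV h1 h h1H hH) => [|[|]] hc; [left|right;left|right;right]=> x y hx hk;
    rewrite (in_graph_kind h1H hx hk); by [apply: hc | rewrite hc | apply: hc].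
- case: (classic (below V h0 h)) => hl; [left|right;right] => x y hx hk;
    have [K1 K2] := in_band_kind h0H hH hx hk; auto.
- by left=> x y hx hk; apply: in_lowest_kind.
Qed.

Lemma fibre_kinds_disjoint k1 k2 x y :
  In k1 (fibre_kinds V) -> In k2 (fibre_kinds V) -> cset ltR V x ->
  in_kind k1 x y -> in_kind k2 x y -> k1 = k2.
Proof.
have GB : forall h1 h0, In h1 H -> In h0 H -> cset ltR V x ->
    in_kind (KGraph (rep V h1)) x y -> in_kind (KBand (Fin (rep V h0)) (next V h0)) x y -> False.
  move=> h1 h0 h1H h0H hx k1' k2'.
  exact: (in_band_kind_neq h0H h1H hx k2' (in_graph_kind h1H hx k1')).
have GL : forall h1, In h1 H -> cset ltR V x ->
    in_kind (KGraph (rep V h1)) x y -> in_kind (KBand NInf (lowest V)) x y -> False.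
  move=> h1 h1H hx k1' k2'.
  by have := in_lowest_kind h1H hx k2'; rewrite -(in_graph_kind h1H hx k1') => /ltR_irr.
have BL : forall h0, In h0 H -> cset ltR V x ->
    in_kind (KBand (Fin (rep V h0)) (next V h0)) x y ->
    in_kind (KBand NInf (lowest V)) x y -> False.
  move=> h0 h0H hx k1' k2'.
  have [_ K2] := in_band_kind h0H h0H hx k1'.
  exact: ltR_asym (in_lowest_kind h0H hx k2') (K2 (@below_irr h0)).
move=> /In_fibre_kinds [[h1 [h1H ->]]|[[h1 [h1H ->]]|->]]
  /In_fibre_kinds [[h2 [h2H ->]]|[[h2 [h2H ->]]|->]] hx q1 q2.
- congr KGraph; apply: eq_rep => //; apply: (agree_of_eq h1H h2H hx);
    by rewrite -(in_graph_kind h1H hx q1) -(in_graph_kind h2H hx q2).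
- by case: (GB _ _ h1H h2H hx q1 q2).
- by case: (GL _ h1H hx q1 q2).
- by case: (GB _ _ h2H h1H hx q2 q1).
- have e : agree V h1 h2.
    case: (proj2 hV h1 h2 h1H h2H) => [hl|[//|hl]].
    + have [K1 _] := in_band_kind h1H h2H hx q1; have [_ K2] := in_band_kind h2H h2H hx q2.
      by case: (ltR_asym (K1 hl) (K2 (@below_irr h2))).
    + have [K1 _] := in_band_kind h2H h1H hx q2; have [_ K2] := in_band_kind h1H h1H hx q1.
      by case: (ltR_asym (K1 hl) (K2 (@below_irr h1))).
  by rewrite (eq_rep h1H e) (eq_next e).
- by case: (BL _ h1H hx q1 q2).
- by case: (GL _ h2H hx q2 q1).
- by case: (BL _ h2H hx q2 q1).
- by [].
Qed.

Lemma fibre_kinds_wf k x : In k (fibre_kinds V) -> cset ltR V x ->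
  match k with KGraph _ => True | KBand f g => xlt ltR (xeval f x) (xeval g x) end.
Proof.
move=> /In_fibre_kinds [[h1 [h1H ->]]|[[h0 [h0H ->]]|->]] hx //=.
  case: (next_cases h0H) => [[-> _]|[m [hm [[hm1 _] ->]]]] //=.
  by rewrite !leval_rep //; apply: hm1.
by rewrite /lowest; case: find_first.
Qed.

Lemma fibre_kinds_cover x y : cset ltR V x -> exists k, In k (fibre_kinds V) /\ in_kind k x y.
Proof.
move=> hx.
case: (classic (exists h, In h H /\ y = leval h x)) => [[h [hH e]]|hno].
  exists (KGraph (rep V h)); split; first by apply/In_fibre_kinds; left; exists h.
  by rewrite /= leval_rep.
case: (classic (exists h, In h H /\ ltR (leval h x) y)) => [hex|hno2].
  have [m [hm [hmy hmax]]] := exists_maxR (fun h => leval h x) hex.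
  exists (KBand (Fin (rep V m)) (next V m)); split.
    by apply/In_fibre_kinds; right; left; exists m.
  rewrite /= leval_rep //; split=> //.
  case: (next_cases hm) => [[-> _]|[m' [hm' [[hm1 _] ->]]]] //=.
  rewrite leval_rep //.
  case: (ltR_total y (leval m' x)) => [//|[e|hlt]].
    by case: hno; exists m'.
  by case: (hmax m' hm' hlt); apply: hm1.
exists (KBand NInf (lowest V)); split; first by apply/In_fibre_kinds; right; right.
split=> //.
rewrite /lowest; case e: find_first => [a|] //=.
have [ha _] := find_first_some e.
rewrite leval_rep //.
case: (ltR_total y (leval a x)) => [//|[e2|hlt]].
  by case: hno; exists a.
by case: hno2; exists a.
Qed.

Lemma fibre_band_closure h f g c : In h H -> In (KBand f g) (fibre_kinds V) ->
  Defs.closure ltR (cset ltR V) c ->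
  ~ (xlt ltR (xeval f c) (Fin (leval h c)) /\ xlt ltR (Fin (leval h c)) (xeval g c)).
Proof.
move=> hH /In_fibre_kinds [[? [_ //]]|[[h0 [h0H [-> ->]]]|[-> ->]]] hc.
  case: (classic (below V h0 h)) => hl.
    have [m [hm [[_ hm2] ->]]] := next_exists h0H (ex_intro _ h (conj hH hl)).
    case=> _ /=; apply: (closure_nlt _ hc) => x hx; rewrite leval_rep //.
    exact: not_below_nlt hH hm hx (hm2 h hH hl).
  case=> /= + _; apply: (closure_nlt _ hc) => x hx; rewrite leval_rep //.
  exact: not_below_nlt h0H hH hx hl.
have [m [hm [hmin ->]]] := lowest_exists hH.
case=> _ /=; apply: (closure_nlt _ hc) => x hx; rewrite leval_rep //.
exact: not_below_nlt hH hm hx (hmin h hH).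
Qed.

End OrderedBase.
End Fibre.

Lemma fibre_graph_in n (H : list (lin n)) V f : In (KGraph f) (fibre_kinds H V) -> In f H.
Proof. by move/In_fibre_kinds => [[h [hH [->]]]|[[h [_ //]]|//]]; apply: rep_in. Qed.

Definition solve_last n (f : lin n.+1) : lin n :=
  (lcoefZ (- (f.1.2)^-1) f.1.1, (- (f.1.2)^-1) *: f.2).
Definition drop_last n (f : lin n.+1) : lin n := (f.1.1, f.2).

Lemma leval_solve_last n (f : lin n.+1) x y : f.1.2 != 0 ->
  leval f ((x, y) : pt n.+1) = f.1.2 *: (y - leval (solve_last f) x).
Proof.
move=> hl; rewrite /leval /= dotZ -scalerDr scalerBr scalerA mulrN mulrV; last exact: unitL.
by rewrite scaleN1r opprK addrCA addrA.
Qed.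

Lemma leval_drop_last n (f : lin n.+1) x y : f.1.2 = 0 ->
  leval f ((x, y) : pt n.+1) = leval (drop_last f) x.
Proof. by move=> hl; rewrite /leval /= hl scale0r addr0. Qed.

Definition bound_maps n (k : ckind (L:=L) R n) : list (lin n) :=
  let fins b := match b with Fin f => f :: nil | _ => nil end in
  match k with KGraph f => f :: nil | KBand lo hi => fins lo ++ fins hi end.

Section Lift.
Variables (n : nat) (H : list (lin n)) (B : list (cd n)).
Hypotheses (hB : good B) (hH : forall V, In V B -> ordered_on H V).

Definition lift : list (cd n.+1) :=
  flat_map (fun V => filterP (fun e : cd n.+1 => exists p, cset ltR e p)
                              (map (fun k => (V, k)) (fibre_kinds H V))) B.

Lemma In_lift e : In e lift <->
  exists V k, In V B /\ In k (fibre_kinds H V) /\ e = (V, k) /\ exists p, cset ltR e p.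
Proof.
rewrite List.in_flat_map; split.
  by case=> V [hV /In_filterP [/In_map [k [<- hk]] hp]]; exists V, k.
case=> V [k [hV [hk [-> hp]]]]; exists V; split=> //; apply/In_filterP; split=> //.
by apply/In_map; exists k.
Qed.

Lemma lift_covering : covering lift.
Proof.
have [_ [hcov _]] := good_partition hB.
move=> [x y]; have [V [hV hx]] := hcov x.
have [k [hk hkin]] := fibre_kinds_cover (hH hV) y hx.
by exists (V, k); split=> //; apply/In_lift; exists V, k; do 3!split=> //; exists (x, y).
Qed.

Lemma proj_lift d : In d (proj lift) <-> In d B.
Proof.
have [hcl [_ hne]] := good_partition hB.
split; first by case/In_proj => e [<- /In_lift [V [k [hV [_ [-> _]]]]]].
move=> hd; have [x hx] := hne d hd.
have [e [he hxe]] := lift_covering (x, 0).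
have [V [k [hV [hk [ee _]]]]] := proj1 (In_lift e) he; subst e.
have <- : V = d by apply: hcl => //; exists x; split=> //; case: hxe.
by apply/In_proj; exists (V, k).
Qed.

Lemma lift_disjoint : disjoint_cells lift.
Proof.
have [hcl _] := good_partition hB.
move=> e1 e2 /In_lift [V1 [k1 [hV1 [hk1 [-> _]]]]] /In_lift [V2 [k2 [hV2 [hk2 [-> _]]]]].
case=> [[x y] [[hx1 hy1] [hx2 hy2]]].
have eV : V1 = V2 by apply: hcl => //; exists x.
by subst V2; rewrite (fibre_kinds_disjoint (hH hV1) hk1 hk2 hx1 hy1 hy2).
Qed.

Lemma lift_full_fibres : full_fibres lift.
Proof.
move=> e /In_lift [V [k [hV [hk [-> [[x0 y0] [_ h0]]]]]]] x hx.
have [y hy] := in_kind_fibre (fibre_kinds_wf (hH hV) hk hx) (ex_intro _ x0 (ex_intro _ y0 h0)).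
by exists y.
Qed.

Lemma lift_good : good lift.
Proof.
have [hcl [_ hne]] := good_partition hB.
split; first exact: lift_disjoint.
split; first exact: lift_covering.
split; first by move=> e /In_lift [V [k [_ [_ [-> hp]]]]].
split.
  move=> e /In_lift [V [k [hV [hk [-> _]]]]]; split; first exact: (good_cwf hB).
  by case: k hk => // f g hk x hx; apply: (fibre_kinds_wf (hH hV) hk hx).
split; first exact: lift_full_fibres.
split; first by apply: eq_mem_good hB => d; rewrite proj_lift.
split.
  move=> S f T g /In_lift [S' [k1 [_ [hk1 [[_ ek1] _]]]]].
  move=> /In_lift [T' [k2 [_ [hk2 [[_ ek2] _]]]]] V.
  move/proj_lift => hV; subst k1 k2.
  exact: (proj2 (hH hV) _ _ (fibre_graph_in hk1) (fibre_graph_in hk2)).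
move=> S h T f g /In_lift [S' [k1 [_ [hk1 [[_ ?] _]]]]] /In_lift [T' [k2 [hT [hk2 [[? ?] _]]]]].
subst k1 T' k2; case=> c [_ [hcT hc]].
exact: (fibre_band_closure (hH hT) (fibre_graph_in hk1) hk2 hcT hc).
Qed.

Lemma lift_sign_inv_solved (f : lin n.+1) : f.1.2 != 0 -> In (solve_last f) H ->
  forall c, In c lift -> sign_inv (cset ltR c) (leval f).
Proof.
move=> hl hf c /In_lift [V [k [hV [hk [-> _]]]]].
have S1 : sign_inv (cset ltR ((V, k) : cd n.+1)) (fun p => p.2 - leval (solve_last f) p.1).
  case: (fibre_kind_sign (hH hV) hf hk) => [P|[P|P]];
    [left|right;left|right;right] => -[x y] [hx hy].
  - by move: (P _ _ hx hy) => /subR_lt0.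
  - by rewrite /= (P x y hx hy) subrr.
  - by move: (P _ _ hx hy) => /subR_gt0.
by apply: eq_sign_inv (sign_invZ S1 hl) _ => -[x y] _; rewrite leval_solve_last.
Qed.

Lemma lift_sign_inv_dropped (f : lin n.+1) : f.1.2 = 0 ->
  (forall V, In V B -> sign_inv (cset ltR V) (leval (drop_last f))) ->
  forall c, In c lift -> sign_inv (cset ltR c) (leval f).
Proof.
move=> hl hf c /In_lift [V [k [hV [_ [-> _]]]]].
by apply: (sign_inv_lift (hf V hV)) => -[x y] [hx _]; split=> //; apply: leval_drop_last.
Qed.

Lemma fibre_xlt_decided V k (b : xR (lin n)) : In V B -> In k (fibre_kinds H V) ->
  (forall f, b = Fin f -> In f H) ->
  ((forall x y, cset ltR V x -> in_kind k x y -> xlt ltR (xeval b x) (Fin y)) \/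
   (forall x y, cset ltR V x -> in_kind k x y -> ~ xlt ltR (xeval b x) (Fin y))) /\
  ((forall x y, cset ltR V x -> in_kind k x y -> xlt ltR (Fin y) (xeval b x)) \/
   (forall x y, cset ltR V x -> in_kind k x y -> ~ xlt ltR (Fin y) (xeval b x))).
Proof.
case: b => [|f|] hV hk hb; [by split; [left|right] => x y _ _ | |by split; [right|left] => x y _ _].
case: (fibre_kind_sign (hH hV) (hb f erefl) hk) => [P|[P|P]]; split.
- by right=> x y hx hy /= h; apply: ltR_asym h (P _ _ hx hy).
- by left=> x y hx hy /=; apply: P.
- by right=> x y hx hy /=; rewrite (P _ _ hx hy); apply: ltR_irr.
- by right=> x y hx hy /=; rewrite (P _ _ hx hy); apply: ltR_irr.
- by left=> x y hx hy /=; apply: P.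
- by right=> x y hx hy /= h; apply: ltR_asym h (P _ _ hx hy).
Qed.

Lemma lift_decides (d : cd n.+1) : decides (cset ltR d.1) B ->
  (forall f, In f (bound_maps d.2) -> In f H) -> decides (cset ltR d) lift.
Proof.
case: d => [d' kd] /= hd hsub e /In_lift [V [k [hV [hk [-> _]]]]].
case: (hd V hV) => [sub|dis]; last by right=> -[x y] [hx _] [hx' _]; apply: dis hx hx'.
case: kd hsub => [f|lo hi] hsub.
  case: (fibre_kind_sign (hH hV) (hsub f (or_introl erefl)) hk) => [P|[P|P]].
  - by right=> -[x y] [hx hy] [_ /= ee]; have := P _ _ hx hy; rewrite ee; apply: ltR_irr.
  - by left=> -[x y] [hx hy]; split; [apply: sub | apply: P _ _ hx hy].
  - by right=> -[x y] [hx hy] [_ /= ee]; have := P _ _ hx hy; rewrite ee; apply: ltR_irr.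
have hlo : forall f, lo = Fin f -> In f H.
  by move=> f ef; apply: hsub; rewrite ef /=; left.
have hhi : forall f, hi = Fin f -> In f H.
  by move=> f ef; apply: hsub; rewrite ef /=; apply/List.in_app_iff; right; left.
have [[A|A] _] := fibre_xlt_decided hV hk hlo; last first.
  by right=> -[x y] [hx hy] [_ [h1 _]]; apply: (A x y hx hy h1).
have [_ [B'|B']] := fibre_xlt_decided hV hk hhi; last first.
  by right=> -[x y] [hx hy] [_ [_ h2]]; apply: (B' x y hx hy h2).
by left=> -[x y] [hx hy]; split; [apply: sub | split; [apply: A | apply: B']].
Qed.

End Lift.

Lemma exists_good_decomposition n (F : list (lin n)) (Ds : list (cd n)) :
  exists C : list (cd n), good C /\
    (forall f, In f F -> forall c, In c C -> sign_inv (cset ltR c) (leval f)) /\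
    (forall d, In d Ds -> decides (cset ltR d) C).
Proof.
elim: n F Ds => [|n IH] F Ds.
  exists (tt :: nil); split; [|split].
  - by split; [case=> [] [] _ _ _ | split=> [x|d _]; [exists tt; split; [left|]|exists tt]].
  - by move=> f _ c _; case: (ltR_total (leval f tt) 0) => [h|[h|h]];
      [left|right;left|right;right] => -[].
  - by move=> d _ c _; left; case: d.
pose H := map (@solve_last n) (List.filter (fun f : lin n.+1 => f.1.2 != 0) F) ++
          flat_map (fun d : cd n.+1 => bound_maps d.2) Ds.
pose G := map (@drop_last n) (List.filter (fun f : lin n.+1 => f.1.2 == 0) F).
have [B [hB [hsB hdB]]] := IH (G ++ flat_map (fun a => map (linB a) H) H) (map fst Ds).
have hH : forall V, In V B -> ordered_on H V.
  move=> V hV; split; first by have [_ [_ hne]] := good_partition hB; apply: hne.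
  move=> a b ha hb; apply: sign_inv_levalB; apply: hsB hV.
  apply/List.in_app_iff; right; apply/List.in_flat_map.
  by exists a; split=> //; apply/In_map; exists b.
exists (lift H B); split; first exact: lift_good.
split=> [f hf|[d' kd] hd].
  case: (eqVneq f.1.2 0) => [hl|hl].
    apply: (lift_sign_inv_dropped hl) => // V hV; apply: hsB hV.
    apply/List.in_app_iff; left; apply/In_map; exists f; split=> //.
    by apply/List.filter_In; rewrite hl eqxx.
  apply: (lift_sign_inv_solved hH hl) => //.
  by apply/List.in_app_iff; left; apply/In_map; exists f; split=> //; apply/List.filter_In.
apply: (lift_decides hH) => [|f hf].
  by apply: hdB; apply/In_map; exists (d', kd).
by apply/List.in_app_iff; right; apply/List.in_flat_map; exists (d', kd).
Qed.

Lemma special_refinement n (Y : pt n -> Prop) (D : list (cd n)) : is_ldec_of ltR Y D ->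
  exists C : list (cd n), is_special ltR Y C /\ refines ltR C D.
Proof.
case=> FD [hFD [hFY hDin]].
have [C [hg [_ href]]] := exists_good_decomposition (nil : list (lin n)) FD.
have [_ [hcov hne]] := good_partition hg.
have hCY : decides Y C.
  move=> c hc; have [p hp] := hne c hc; have [d [hd hpd]] := ldec_covering hFD p.
  case: (href d hd c hc) => [sub|dis]; last by case: (dis p hp hpd).
  by case: (hFY d hd) => [dy|dn]; [left|right] => x hx; [apply: dy | apply: dn]; apply: sub.
exists (filterP (fun c => forall x, cset ltR c x -> Y x) C); split.
  by apply: (good_special hg hCY) => d; apply: In_filterP.
move=> d hd x; have [hdF hdY] := proj1 (hDin d) hd.
split; last by case=> c [_ [hxc sub]]; apply: sub.
move=> hx; have [c [hc hxc]] := hcov x.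
case: (href d hdF c hc) => [sub|dis]; last by case: (dis x hxc hx).
exists c; split=> //; apply/In_filterP; split=> // z hz; apply: hdY; exact: sub.
Qed.

End LinearCells.

Unset Implicit Arguments.
Theorem mainTheorem6 (L : unitRingType) (ltL : L -> L -> Prop)
  (R : lmodType L) (ltR : R -> R -> Prop) :
  ordered_division_ring ltL ->
  ordered_vector_space ltL ltR ->
  forall (n : nat) (Y : Rn R n -> Prop),
    definable ltR Y ->
    forall D : list (cdesc R n), is_ldec_of ltR Y D ->
    exists C : list (cdesc R n), is_special ltR Y C /\ refines ltR C D.
Proof. by move=> hL hR n Y _ D; apply: (special_refinement hL hR). Qed.
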